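(* With $p=(z-w)^2$ and notation as in the context, for integers $k\ge 2$ and $n\ge 0$: \[ \langle w^k\phi_n,z^k\psi_n\rangle=\begin{cases}0, & n\le k-3,\\[2pt] \dfrac{A^n_{0,n}A^n_{n,0}}{D_nD_{n+1}}, & n=k-2,\\[6pt] \dfrac{-A^{n+1}_{0,n+1}A^n_{n,n+1-k}+A^n_{0,n}A^n_{n,n+2-k}}{D_nD_{n+1}}, & n\ge k-1.\end{cases} \] Consequently, for every $k\ge3$, \[ \Sigma_k=\sum_{n=k-2}^\infty\left(\frac{2(n+3-k)(n^2+5n+4+3k-3k^2)}{(n+1)(n+2)(n+3)(n+4)}\right)^2 . \]
   Context: $H^2(\mathbb D^2)$ is the Hardy space on the bidisk (monomials $z^aw^b$ orthonormal). Let $p=(z-w)^2$ and $M=[p]$ the smallest closed subspace containing $p$ invariant under multiplication by $z$ and $w$. For $n\ge0$ let $A^n=(a_{i,j})_{i,j=0}^n$ with $a_{i,j}=\langle pw^{|i-j|},pz^{|i-j|}\rangle$ (the symmetric pentadiagonal Toeplitz matrix with diagonal $6$, first off-diagonals $-4$, second off-diagonals $1$); $D_0=1$, $D_n=\det A^{n-1}$ ($n\ge1$); $A^n_{i,j}$ is the $(i,j)$ cofactor of $A^n$ ($(-1)^{i+j}$ times the minor deleting row $i$ and column $j$; $A^0_{0,0}=1$). Define $\phi_0=\psi_0=p/\|p\|$ and for $n\ge1$ $\phi_n=\frac{\sum_{j=0}^n pA^n_{0,j}z^jw^{n-j}}{\sqrt{D_{n+1}D_n}}$, $\psi_n=\frac{\sum_{j=0}^n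 pA^n_{n,j}z^jw^{n-j}}{\sqrt{D_{n+1}D_n}}$ (orthonormal bases of $M\ominus zM$ and $M\ominus wM$). For $k\ge0$, $\Sigma_k:=\sum_{n\ge0}|\langle w^k\phi_n,z^k\psi_n\rangle|^2$. *)

From HB Require Import structures.
From mathcomp Require Import all_boot all_order all_algebra.
From mathcomp Require Import all_classical all_reals all_analysis.
Set Implicit Arguments. Unset Strict Implicit. Unset Printing Implicit Defensive.
Import Order.TTheory GRing.Theory Num.Theory.
Local Open Scope ring_scope.

Section HardyBidisk.
Variable R : realType.

(* Polynomials in two variables z, w: P : {poly {poly R}}, where the outer
   variable is z and the inner one is w; the coefficient of z^a w^b is
   (P`_a)`_b. *)
Definition bipoly := {poly {poly R}}.
Definition zv : bipoly := 'X.
Definition wv : bipoly := ('X)%:P.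
Definition cst (c : R) : bipoly := c%:P%:P.
Definition coef2 (P : bipoly) (a b : nat) : R := (P`_a)`_b.

(* H^2(D^2) inner product restricted to polynomials (monomials orthonormal);
   all polynomials here have real coefficients, so no conjugation. *)
Definition ip (P Q : bipoly) : R :=
  \sum_(a < size P) \sum_(b < size P`_a) coef2 P a b * coef2 Q a b.

Definition pp : bipoly := (zv - wv) ^+ 2.

Definition Amx (n : nat) : 'M[R]_n.+1 :=
  \matrix_(i < n.+1, j < n.+1)
     ip (pp * wv ^+ (maxn i j - minn i j)) (pp * zv ^+ (maxn i j - minn i j)).

Definition Dn (n : nat) : R := if n is m.+1 then \det (Amx m) else 1.

Definition Acof (n i j : nat) : R := cofactor (Amx n) (inord i) (inord j).

Definition phi (n : nat) : bipoly :=
  if n is 0 then cst (Num.sqrt (ip pp pp))^-1 * pp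
  else cst (Num.sqrt (Dn n.+1 * Dn n))^-1 *
       \sum_(j < n.+1) pp * cst (Acof n 0 j) * zv ^+ j * wv ^+ (n - j).

Definition psi (n : nat) : bipoly :=
  if n is 0 then cst (Num.sqrt (ip pp pp))^-1 * pp
  else cst (Num.sqrt (Dn n.+1 * Dn n))^-1 *
       \sum_(j < n.+1) pp * cst (Acof n n j) * zv ^+ j * wv ^+ (n - j).

Definition inner (k n : nat) : R := ip (wv ^+ k * phi n) (zv ^+ k * psi n).

Definition sigma_term (k n : nat) : R :=
  ((2 * (n%:R + 3 - k%:R) * (n%:R ^+ 2 + 5 * n%:R + 4 + 3 * k%:R - 3 * k%:R ^+ 2))
    / (n.+1%:R * n.+2%:R * n.+3%:R * n.+4%:R)) ^+ 2.

End HardyBidisk.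

From Pilot Require Import Defs.
From HB Require Import structures.
From mathcomp Require Import all_boot all_order all_algebra.
From mathcomp Require Import all_classical all_reals all_analysis.
From mathcomp Require Import ring lra zify.
Import Order.TTheory GRing.Theory Num.Theory numFieldNormedType.Exports.
Set Implicit Arguments. Unset Strict Implicit. Unset Printing Implicit Defensive.
Local Open Scope classical_set_scope.
Local Open Scope ring_scope.

(* The Gram matrix A^n of the vectors p z^j w^(n-j) is the banded Toeplitz
   matrix with diagonals 6, -4, 1, the coefficients of (1 - t)^4.  The cubic
   c_n(x) = (n+2)(n+3)/12 (x+1)(n+1-x)(n+2-x) is killed by the fourth
   difference and vanishes at x = -1, n+1, n+2, hence A^n (c_n(j))_j is
   D_(n+1) times the first unit vector, where D_n = (n+1)(n+2)^2(n+3)/12.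
   Cramer's rule then gives det A^n = D_(n+1) by induction on n, and shows that
   the first and last rows of cofactors of A^n are c_n(j) and c_n(n-j).
   Expanding w^k phi_n and z^k psi_n in the monomials p z^a w^b turns the inner
   product into sum_(l,j) c_n(n-l) c_n(j) A_(j,l+k) / (D_n D_(n+1)), in which,
   for the same reason, only the boundary columns l+k = n+1, n+2 survive.  The
   resulting closed form is O(1/n^2), so the partial sums of its squares
   increase to a finite limit, and from n = k-2 on they are the terms of the
   stated series. *)

Ltac case_eqn_ring := repeat (case: eqP => ?; try (exfalso; lia)); rewrite /=; ring.

Lemma cofactor_of_mulmx_delta (F : comNzRingType) m (A : 'M[F]_m) (v : 'cV_m) i d :
  A *m v = d *: delta_mx i 0 -> forall j, \det A * v j 0 = d * cofactor A i j.
Proof.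
move=> Av j; have := congr1 (mulmx (\adj A)) Av.
rewrite mulmxA mul_adj_mx mul_scalar_mx -scalemxAr -colE => /matrixP /(_ j 0).
by rewrite !mxE.
Qed.

Lemma big_ord_widen0 (V : nmodType) m n (F : nat -> V) : (m <= n)%N ->
  (forall i, (m <= i < n)%N -> F i = 0) -> \sum_(i < m) F i = \sum_(i < n) F i.
Proof.
move=> mn F0; rewrite -!(big_mkord xpredT) (big_cat_nat (leq0n m) mn) /=.
by rewrite [X in _ + X]big1_seq ?addr0 // => i; rewrite mem_index_iota => /F0.
Qed.

Section PentadiagonalToeplitz.
Variable F : comNzRingType.

Definition cut (f : nat -> F) N x : F := if (x < N)%N then f x else 0.

Lemma cut_in f N x : (x < N)%N -> cut f N x = f x.
Proof. by rewrite /cut => ->. Qed.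

Lemma cut_out f N x : (N <= x)%N -> cut f N x = 0.
Proof. by rewrite /cut ltnNge => ->. Qed.

Lemma sum_mul_eq_shift (f : nat -> F) N k x :
  \sum_(j < N) f j * (x == (j + k)%N)%:R = if (k <= x)%N then cut f N (x - k) else 0.
Proof.
case: (leqP k x) => [kx | xk]; last first.
  by apply: big1 => j _; case: eqP => [xjk | _]; [lia | rewrite mulr0].
rewrite /cut; case: (ltnP (x - k) N) => [xN | Nx]; last first.
  by apply: big1 => j _; case: eqP => [xjk | _]; [have := ltn_ord j; lia | rewrite mulr0].
rewrite (bigD1 (Ordinal xN)) //= subnK // eqxx mulr1 big1 ?addr0 // => j.
rewrite -val_eqE /= => /eqP jxk; case: eqP => [xjk | _]; [lia | by rewrite mulr0].
Qed.

Definition pent a c : F :=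
  6 * (a == c)%:R - 4 * (a == c.+1)%:R - 4 * (a.+1 == c)%:R
  + (a == c.+2)%:R + (a.+2 == c)%:R.

Lemma pent_sym a c : pent a c = pent c a.
Proof. rewrite /pent; case_eqn_ring. Qed.

Lemma pent_absdiff i j : pent 0 (maxn i j - minn i j)%N = pent i j.
Proof. rewrite /pent; case_eqn_ring. Qed.

Lemma pentSS a c : pent a.+1 c.+1 = pent a c.
Proof. by rewrite /pent !eqSS. Qed.

Lemma sum_mul_pent (f : nat -> F) N i :
  \sum_(j < N) f j * pent i j =
  6 * cut f N i - 4 * (if i is i'.+1 then cut f N i' else 0) - 4 * cut f N i.+1
  + (if i is i'.+2 then cut f N i' else 0) + cut f N i.+2.
Proof.
have pentE j : f j * pent i j =
    6 * (f j * (i == (j + 0)%N)%:R) + -4 * (f j * (i == (j + 1)%N)%:R)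
    + -4 * (f j * (i.+1 == (j + 0)%N)%:R) + f j * (i == (j + 2)%N)%:R
    + f j * (i.+2 == (j + 0)%N)%:R.
  by rewrite /pent !addn0 addn1 addn2; ring.
under eq_bigr => j _ do rewrite pentE.
rewrite !big_split /= -!mulr_sumr !sum_mul_eq_shift !subn0.
by case: i {pentE} => [|[|i]] /=; rewrite ?subSS ?subn0; ring.
Qed.

Definition pentmx n : 'M[F]_n.+1 := \matrix_(i, j) pent i j.

Lemma cofactor_pentmx00 n : cofactor (pentmx n.+1) 0 0 = \det (pentmx n).
Proof.
rewrite /cofactor /= expr0 mul1r; congr (\det _).
by apply/matrixP => i j; rewrite !mxE !lift0 pentSS.
Qed.

End PentadiagonalToeplitz.

Arguments pent {F}.
Arguments pentmx {F}.

Section CubicAdjugate.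
Variable F : realFieldType.

Definition adj_cubic n (x : F) : F :=
  (n%:R + 2) * (n%:R + 3) / 12 * ((x + 1) * (n%:R + 1 - x) * (n%:R + 2 - x)).

Definition adj_first n j := adj_cubic n j%:R.
Definition adj_last n j := adj_cubic n (n%:R - j%:R).

Definition det_closed n : F := (n%:R + 1) * (n%:R + 2) ^+ 2 * (n%:R + 3) / 12.

Lemma det_closed_gt0 n : 0 < det_closed n.
Proof.
have n_ge0 : 0 <= n%:R :> F := ler0n _ _.
rewrite /det_closed; apply: divr_gt0; last lra.
by apply: mulr_gt0; [apply: mulr_gt0; [lra | apply: exprn_gt0; lra] | lra].
Qed.

Lemma cut_adj_first n x : (x <= n.+2)%N -> cut (adj_first n) n.+1 x = adj_first n x.
Proof.
move=> xn; case: (ltnP x n.+1) => [|nx]; first exact: cut_in.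
rewrite cut_out //; have [->|->] : x = n.+1 \/ x = n.+2 by lia.
all: by rewrite /adj_first /adj_cubic -!natr1; ring.
Qed.

Lemma cut_adj_last n x : (x <= n.+1)%N -> cut (adj_last n) n.+1 x = adj_last n x.
Proof.
move=> xn; case: (ltnP x n.+1) => [|nx]; first exact: cut_in.
rewrite cut_out //; have -> : x = n.+1 by lia.
by rewrite /adj_last /adj_cubic -!natr1; ring.
Qed.

Lemma row_adj_first n i : (i <= n)%N ->
  \sum_(j < n.+1) adj_first n j * pent i j = (i == 0%N)%:R * det_closed n.+1.
Proof.
move=> i_le_n; rewrite sum_mul_pent.
case: i i_le_n => [|[|i]] i_le_n /=; rewrite !cut_adj_first; try lia;
  rewrite /adj_first /adj_cubic /det_closed -!natr1; ring.
Qed.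

Lemma row_adj_last n i : (i <= n)%N ->
  \sum_(j < n.+1) adj_last n j * pent i j = (i == n)%:R * det_closed n.+1.
Proof.
move=> i_le_n; rewrite sum_mul_pent; case: (ltnP i n) => [i_lt_n | n_le_i].
  rewrite (_ : (i == n) = false); last by apply/eqP; lia.
  case: i i_le_n i_lt_n => [|[|i]] i_le_n i_lt_n /=; rewrite !cut_adj_last; try lia;
    rewrite /adj_last /adj_cubic /det_closed -!natr1; ring.
have -> : i = n by lia.
rewrite eqxx (@cut_out _ _ _ n.+2) //.
case: n {i_le_n n_le_i} => [|[|n]] /=; rewrite !cut_adj_last; try lia;
  rewrite /adj_last /adj_cubic /det_closed -!natr1; ring.
Qed.

Lemma pentmx_adj_first n :
  pentmx n *m \col_(j < n.+1) adj_first n j = det_closed n.+1 *: delta_mx 0 0.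
Proof.
apply/matrixP => i k; rewrite !mxE (ord1 k) eqxx andbT -val_eqE /=.
rewrite mulrC -(@row_adj_first n i (ltn_ord i)).
by apply: eq_bigr => j _; rewrite !mxE mulrC.
Qed.

Lemma pentmx_adj_last n :
  pentmx n *m \col_(j < n.+1) adj_last n j = det_closed n.+1 *: delta_mx ord_max 0.
Proof.
apply/matrixP => i k; rewrite !mxE (ord1 k) eqxx andbT -val_eqE /=.
rewrite mulrC -(@row_adj_last n i (ltn_ord i)).
by apply: eq_bigr => j _; rewrite !mxE mulrC.
Qed.

Lemma det_pentmx n : \det (pentmx n) = det_closed n.+1 :> F.
Proof.
elim: n => [|n IHn].
  have := cofactor_of_mulmx_delta (pentmx_adj_first 0) 0.
  rewrite !mxE /cofactor /= expr0 mul1r det_mx00.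
  have -> : adj_first 0 0 = 1 by rewrite /adj_first /adj_cubic; field.
  by rewrite !mulr1.
have := cofactor_of_mulmx_delta (pentmx_adj_first n.+1) 0.
rewrite !mxE cofactor_pentmx00 IHn.
have -> : adj_first n.+1 0 = det_closed n.+1.
  by rewrite /adj_first /adj_cubic /det_closed -!natr1; ring.
by move/(mulIf (lt0r_neq0 (det_closed_gt0 n.+1))).
Qed.

Lemma cofactor_pentmx_first n (j : 'I_n.+1) : cofactor (pentmx n) 0 j = adj_first n j.
Proof.
have := cofactor_of_mulmx_delta (pentmx_adj_first n) j.
by rewrite det_pentmx mxE => /(mulfI (lt0r_neq0 (det_closed_gt0 n.+1))) ->.
Qed.

Lemma cofactor_pentmx_last n (j : 'I_n.+1) :
  cofactor (pentmx n) ord_max j = adj_last n j.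
Proof.
have := cofactor_of_mulmx_delta (pentmx_adj_last n) j.
by rewrite det_pentmx mxE => /(mulfI (lt0r_neq0 (det_closed_gt0 n.+1))) ->.
Qed.

Lemma col_adj_first n m : (2 <= m)%N ->
  \sum_(j < n.+1) adj_first n j * pent j m =
  (n.+2 == m)%:R * adj_first n n - (n.+1 == m)%:R * adj_first n.+1 n.+1.
Proof.
move=> m_ge2; under eq_bigr => j _ do rewrite pent_sym.
rewrite sum_mul_pent; case: m m_ge2 => [|[|m]] // _ /=.
have [mn | [-> | [-> | nm]]] : (m.+2 <= n)%N \/ n = m.+1 \/ n = m \/ (n < m)%N by lia.
- rewrite !cut_adj_first; try lia.
  rewrite (_ : (n.+2 == m.+2) = false) 1?(_ : (n.+1 == m.+2) = false); try by apply/eqP; lia.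
  rewrite /= /adj_first /adj_cubic -!natr1; ring.
- rewrite (@cut_out _ _ m.+2 m.+4); last lia.
  rewrite !cut_adj_first; try lia.
  rewrite eqxx (_ : (m.+3 == m.+2) = false); last by apply/eqP; lia.
  rewrite /= /adj_first /adj_cubic -!natr1; ring.
- rewrite (@cut_in _ _ m.+1 m) ?(@cut_out _ _ m.+1 m.+1) ?(@cut_out _ _ m.+1 m.+2)
    ?(@cut_out _ _ m.+1 m.+3) ?(@cut_out _ _ m.+1 m.+4); try lia.
  rewrite eqxx (_ : (m.+1 == m.+2) = false); last by apply/eqP; lia.
  rewrite /=; ring.
- rewrite !cut_out; try lia.
  rewrite (_ : (n.+2 == m.+2) = false) 1?(_ : (n.+1 == m.+2) = false); try by apply/eqP; lia.
  rewrite /=; ring.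
Qed.

End CubicAdjugate.

Arguments adj_first {F}.
Arguments adj_last {F}.
Arguments det_closed {F}.

Section SeriesBound.
Variable F : realFieldType.

Definition sigma_root k n : F :=
  (2 * (n%:R + 3 - k%:R) * (n%:R ^+ 2 + 5 * n%:R + 4 + 3 * k%:R - 3 * k%:R ^+ 2))
    / (n.+1%:R * n.+2%:R * n.+3%:R * n.+4%:R).

Definition tail_const (K : F) : F :=
  4 * (1 + K) ^+ 2 * (1 + 3 * K + 3 * K ^+ 2) ^+ 2.

Lemma tail_const_ge0 K : 0 <= tail_const K.
Proof. by rewrite /tail_const; apply: mulr_ge0; [apply: mulr_ge0|]; rewrite ?sqr_ge0. Qed.

Lemma ler_sqr_of_bounds (a A : F) : - A <= a <= A -> a ^+ 2 <= A ^+ 2.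
Proof. by case/andP => lo hi; nra. Qed.

Lemma sigma_root_sqr_le k n :
  sigma_root k n ^+ 2 <= tail_const k%:R / (n.+1%:R * n.+2%:R).
Proof.
rewrite /sigma_root -[n.+4]addn4 -[n.+3]addn3 -[n.+2]addn2 -[n.+1]addn1 !natrD.
move: (ler0n F k) (ler0n F n); move: (k%:R : F) (n%:R : F) => K x K_ge0 x_ge0.
set den := (x + 1%:R) * (x + 2%:R) * (x + 3%:R) * (x + 4%:R).
set Y := (x + 1) * (x + 4).
set A := (1 + K) * (x + 3).
set B := (1 + 3 * K + 3 * K ^+ 2) * Y.
have -> : x ^+ 2 + 5 * x + 4 + 3 * K - 3 * K ^+ 2 = Y + 3 * K - 3 * K ^+ 2.
  by rewrite /Y; ring.
have Y_ge4 : 4 <= Y by rewrite /Y; nra.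
have K2_ge0 : 0 <= K ^+ 2 := sqr_ge0 K.
have lin_le : (x + 3 - K) ^+ 2 <= A ^+ 2.
  by apply: ler_sqr_of_bounds; rewrite /A; apply/andP; split; nra.
have quad_le : (Y + 3 * K - 3 * K ^+ 2) ^+ 2 <= B ^+ 2.
  by apply: ler_sqr_of_bounds; rewrite /B; apply/andP; split; nra.
have den_gt0 : 0 < den.
  by rewrite /den; apply: mulr_gt0; [apply: mulr_gt0; [apply: mulr_gt0|]|]; lra.
apply: (@le_trans _ _ (tail_const K / (x + 2%:R) ^+ 2)); last first.
  apply: ler_wpM2l; first exact: tail_const_ge0.
  by rewrite lef_pV2 ?posrE; nra.
have -> : tail_const K / (x + 2%:R) ^+ 2 = (2 * A * B) ^+ 2 / den ^+ 2.
  rewrite /tail_const /A /B /Y /den; field.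
  by repeat (apply/andP; split); apply/eqP; lra.
clearbody den A B.
rewrite expr_div_n ler_wpM2r ?invr_ge0 ?exprn_ge0 ?(ltW den_gt0) //.
rewrite !exprMn; apply: ler_pM.
- by rewrite mulr_ge0 ?sqr_ge0.
- exact: sqr_ge0.
- by rewrite ler_wpM2l ?sqr_ge0.
- exact: quad_le.
Qed.

Lemma sum_inv_natSS N : \sum_(0 <= n < N) (n.+1%:R * n.+2%:R : F)^-1 = 1 - N.+1%:R^-1.
Proof.
elim: N => [|N IHN]; first by rewrite big_geq // invr1 subrr.
rewrite big_nat_recr //= IHN -!natr1.
by field; repeat (apply/andP; split); apply/eqP; have := ler0n F N; lra.
Qed.

End SeriesBound.

Arguments sigma_root {F}.

Section HardyBidisk.
Variable R : realType.

Lemma coef2D (P Q : bipoly R) i j : coef2 (P + Q) i j = coef2 P i j + coef2 Q i j.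
Proof. by rewrite /coef2 !coefD. Qed.

Lemma coef2B (P Q : bipoly R) i j : coef2 (P - Q) i j = coef2 P i j - coef2 Q i j.
Proof. by rewrite /coef2 !coefB. Qed.

(* Unqualified [cst] would be the constant function of mathcomp-analysis. *)
Lemma coef2_cstM c (P : bipoly R) i j : coef2 (Defs.cst c * P) i j = c * coef2 P i j.
Proof. by rewrite /coef2 /Defs.cst !coefCM. Qed.

Lemma coef2_sum (I : Type) (r : seq I) (P : I -> bipoly R) i j :
  coef2 (\sum_(x <- r) P x) i j = \sum_(x <- r) coef2 (P x) i j.
Proof. by rewrite /coef2 !coef_sum. Qed.

Lemma coef2_1 i j : coef2 (1 : bipoly R) i j = ((i == 0%N) && (j == 0%N))%:R.
Proof. by rewrite /coef2 coef1; case: eqP => _ /=; rewrite ?coef1 ?coef0. Qed.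

Lemma coef2_zvM (P : bipoly R) i j :
  coef2 (zv R * P) i j = if i is i'.+1 then coef2 P i' j else 0.
Proof. by rewrite /coef2 /zv coefXM; case: i => [|i] //=; rewrite coef0. Qed.

Lemma coef2_wvM (P : bipoly R) i j :
  coef2 (wv R * P) i j = if j is j'.+1 then coef2 P i j' else 0.
Proof. by rewrite /coef2 /wv coefCM coefXM; case: j. Qed.

Lemma coef2_zvXM a (P : bipoly R) i j :
  coef2 (zv R ^+ a * P) i j = if (a <= i)%N then coef2 P (i - a) j else 0.
Proof.
elim: a i => [|a IHa] i; first by rewrite expr0 mul1r subn0.
by rewrite exprS -mulrA coef2_zvM; case: i => [|i] //=; rewrite IHa subSS.
Qed.

Lemma coef2_wvXM b (P : bipoly R) i j :
  coef2 (wv R ^+ b * P) i j = if (b <= j)%N then coef2 P i (j - b) else 0.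
Proof.
elim: b j => [|b IHb] j; first by rewrite expr0 mul1r subn0.
by rewrite exprS -mulrA coef2_wvM; case: j => [|j] //=; rewrite IHb subSS.
Qed.

Lemma coef2_monomial a b i j :
  coef2 (zv R ^+ a * wv R ^+ b) i j = ((i == a) && (j == b))%:R.
Proof.
rewrite -(mulr1 (wv R ^+ b)) coef2_zvXM coef2_wvXM coef2_1.
by case: (leqP a i) => ai; case: (leqP b j) => bj /=;
  repeat (case: eqP => ? /=); try lia.
Qed.

Definition pmono a b : bipoly R := pp R * zv R ^+ a * wv R ^+ b.

Lemma pmonoE a b : pmono a b =
  zv R ^+ a.+2 * wv R ^+ b - Defs.cst 2 * (zv R ^+ a.+1 * wv R ^+ b.+1)
  + zv R ^+ a * wv R ^+ b.+2.
Proof.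
rewrite /pmono /pp /Defs.cst !exprS.
have -> : (2 : R)%:P%:P = 2 :> bipoly R by rewrite !polyC_natr.
ring.
Qed.

Lemma coef2_pmono a b i j : coef2 (pmono a b) i j =
  ((i == a.+2) && (j == b))%:R - 2 * ((i == a.+1) && (j == b.+1))%:R
  + ((i == a) && (j == b.+2))%:R.
Proof. by rewrite pmonoE coef2D coef2B coef2_cstM !coef2_monomial. Qed.

Lemma coef2_pmono_out B a b i j : (a.+2 < B)%N -> (b.+2 < B)%N ->
  (B <= i)%N || (B <= j)%N -> coef2 (pmono a b) i j = 0.
Proof. by move=> aB bB out; rewrite coef2_pmono; case_eqn_ring. Qed.

Definition ip_box B (P Q : bipoly R) : R :=
  \sum_(i < B) \sum_(j < B) coef2 P i j * coef2 Q i j.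

Lemma ip_boxE B (P Q : bipoly R) :
  (forall i j, (B <= i)%N || (B <= j)%N -> coef2 P i j = 0) -> ip P Q = ip_box B P Q.
Proof.
move=> P_out.
have size_P : (size P <= B)%N.
  apply/leq_sizeP => i iB; apply/polyP => j; rewrite coef0.
  by apply: P_out; rewrite iB.
have size_Pi a : (size (P`_a)%R <= B)%N.
  by apply/leq_sizeP => j jB; apply: P_out; rewrite jB orbT.
rewrite /ip /ip_box.
rewrite (big_ord_widen0
  (F := fun a => \sum_(b < size P`_a) coef2 P a b * coef2 Q a b) size_P).
  apply: eq_bigr => a _.
  apply: (big_ord_widen0 (F := fun b => coef2 P a b * coef2 Q a b)) => // j /andP[jP _].
  by rewrite /coef2 nth_default // mul0r.
move=> a /andP[aP _]; rewrite /coef2 (nth_default 0 aP).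
by rewrite size_poly0 big_ord0.
Qed.

Lemma ip_boxDl B (P1 P2 Q : bipoly R) :
  ip_box B (P1 + P2) Q = ip_box B P1 Q + ip_box B P2 Q.
Proof.
rewrite /ip_box -big_split; apply: eq_bigr => i _.
by rewrite -big_split; apply: eq_bigr => j _; rewrite coef2D mulrDl.
Qed.

Lemma ip_boxBl B (P1 P2 Q : bipoly R) :
  ip_box B (P1 - P2) Q = ip_box B P1 Q - ip_box B P2 Q.
Proof.
rewrite /ip_box -sumrB; apply: eq_bigr => i _.
by rewrite -sumrB; apply: eq_bigr => j _; rewrite coef2B mulrBl.
Qed.

Lemma ip_boxZl B c (P Q : bipoly R) : ip_box B (Defs.cst c * P) Q = c * ip_box B P Q.
Proof.
rewrite /ip_box mulr_sumr; apply: eq_bigr => i _; rewrite mulr_sumr.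
by apply: eq_bigr => j _; rewrite coef2_cstM mulrA.
Qed.

Lemma ip_boxZr B c (P Q : bipoly R) : ip_box B P (Defs.cst c * Q) = c * ip_box B P Q.
Proof.
rewrite /ip_box mulr_sumr; apply: eq_bigr => i _; rewrite mulr_sumr.
by apply: eq_bigr => j _; rewrite coef2_cstM mulrCA.
Qed.

Lemma ip_box_suml B N (P : 'I_N -> bipoly R) Q :
  ip_box B (\sum_(x < N) P x) Q = \sum_(x < N) ip_box B (P x) Q.
Proof.
rewrite /ip_box [RHS]exchange_big; apply: eq_bigr => i _.
rewrite [RHS]exchange_big; apply: eq_bigr => j _.
by rewrite coef2_sum mulr_suml.
Qed.

Lemma ip_box_sumr B N (P : bipoly R) (Q : 'I_N -> bipoly R) :
  ip_box B P (\sum_(x < N) Q x) = \sum_(x < N) ip_box B P (Q x).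
Proof.
rewrite /ip_box [RHS]exchange_big; apply: eq_bigr => i _.
rewrite [RHS]exchange_big; apply: eq_bigr => j _.
by rewrite coef2_sum mulr_sumr.
Qed.

Lemma ip_box_monomial B a b (Q : bipoly R) : (a < B)%N -> (b < B)%N ->
  ip_box B (zv R ^+ a * wv R ^+ b) Q = coef2 Q a b.
Proof.
move=> aB bB; rewrite /ip_box (bigD1 (Ordinal aB)) //= [X in _ + X]big1 ?addr0.
  rewrite (bigD1 (Ordinal bB)) //= [X in _ + X]big1 ?addr0.
    by rewrite coef2_monomial !eqxx mul1r.
  move=> j; rewrite -val_eqE /= => /negbTE jb.
  by rewrite coef2_monomial eqxx jb mul0r.
move=> i; rewrite -val_eqE /= => /negbTE ia.
by apply: big1 => j _; rewrite coef2_monomial ia mul0r.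
Qed.

Lemma ip_box_pmonol B a b (Q : bipoly R) : (a.+2 < B)%N -> (b.+2 < B)%N ->
  ip_box B (pmono a b) Q = coef2 Q a.+2 b - 2 * coef2 Q a.+1 b.+1 + coef2 Q a b.+2.
Proof.
move=> aB bB; rewrite pmonoE ip_boxDl ip_boxBl ip_boxZl !ip_box_monomial //; lia.
Qed.

Lemma ip_box_pmono B a b c d : (a + b = c + d)%N -> (a.+2 < B)%N -> (b.+2 < B)%N ->
  ip_box B (pmono a b) (pmono c d) = pent a c.
Proof.
move=> deg aB bB; rewrite ip_box_pmonol // !coef2_pmono /pent.
have same_deg x y u v : (x + y = u + v)%N -> ((x == u) && (y == v)) = (x == u).
  by move=> xyuv; apply/andP/eqP => [[/eqP] // | xu]; split; apply/eqP; lia.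
rewrite !same_deg; try lia.
by rewrite !eqSS; ring.
Qed.

Lemma AmxE n : Amx R n = pentmx n.
Proof.
apply/matrixP => i j; rewrite !mxE -pent_absdiff.
set d := (maxn i j - minn i j)%N.
have -> : pp R * wv R ^+ d = pmono 0 d by rewrite /pmono expr0 mulr1.
have -> : pp R * zv R ^+ d = pmono d 0 by rewrite /pmono expr0 mulr1.
rewrite (@ip_boxE d.+3); last by move=> a b out; apply: coef2_pmono_out out.
by rewrite ip_box_pmono // addn0.
Qed.

Lemma Dn_closed n : Dn R n = det_closed n.
Proof.
case: n => [|n] /=; last by rewrite AmxE det_pentmx.
by rewrite /det_closed; field.
Qed.

Lemma Acof_first n j : (j <= n)%N -> Acof R n 0 j = adj_first n j.
Proof.
move=> jn; rewrite /Acof AmxE (_ : inord 0 = 0); last by apply/val_inj; rewrite /= inordK.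
by rewrite cofactor_pentmx_first inordK.
Qed.

Lemma Acof_last n j : (j <= n)%N -> Acof R n n j = adj_last n j.
Proof.
move=> jn; rewrite /Acof AmxE (_ : inord n = ord_max); last by apply/val_inj; rewrite /= inordK.
by rewrite cofactor_pentmx_last inordK.
Qed.

Lemma ip_pp : ip (pp R) (pp R) = 6.
Proof.
have -> : pp R = pmono 0 0 by rewrite /pmono !expr0 !mulr1.
rewrite (@ip_boxE 3); last by move=> a b out; apply: coef2_pmono_out out.
by rewrite ip_box_pmono // /pent /=; ring.
Qed.

Definition normc n : R := (Num.sqrt (det_closed n.+1 * det_closed n))^-1.

Lemma normc_sqr n : normc n ^+ 2 = (det_closed n.+1 * det_closed n)^-1.
Proof. by rewrite /normc exprVn sqr_sqrtr // mulr_ge0 // ltW // det_closed_gt0. Qed.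

Lemma phiE n : phi R n =
  Defs.cst (normc n) * \sum_(j < n.+1) Defs.cst (adj_first n j) * pmono j (n - j).
Proof.
case: n => [|n].
  rewrite /phi /normc ip_pp big_ord1 /=.
  have -> : adj_first 0 0 = 1 :> R by rewrite /adj_first /adj_cubic; field.
  have -> : det_closed 1 * det_closed 0 = 6 :> R by rewrite /det_closed; field.
  by rewrite /Defs.cst !polyC1 mul1r /pmono !expr0 !mulr1.
rewrite /phi /normc !Dn_closed; congr (_ * _); apply: eq_bigr => j _.
rewrite Acof_first; last by rewrite -ltnS.
by rewrite /pmono; ring.
Qed.

Lemma psiE n : psi R n =
  Defs.cst (normc n) * \sum_(j < n.+1) Defs.cst (adj_last n j) * pmono j (n - j).
Proof.
case: n => [|n].
  rewrite /psi /normc ip_pp big_ord1 /=.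
  have -> : adj_last 0 0 = 1 :> R by rewrite /adj_last /adj_cubic; field.
  have -> : det_closed 1 * det_closed 0 = 6 :> R by rewrite /det_closed; field.
  by rewrite /Defs.cst !polyC1 mul1r /pmono !expr0 !mulr1.
rewrite /psi /normc !Dn_closed; congr (_ * _); apply: eq_bigr => j _.
rewrite Acof_last; last by rewrite -ltnS.
by rewrite /pmono; ring.
Qed.

Lemma wvX_pmono k a b : wv R ^+ k * pmono a b = pmono a (b + k).
Proof. by rewrite /pmono exprD; ring. Qed.

Lemma zvX_pmono k a b : zv R ^+ k * pmono a b = pmono (a + k) b.
Proof. by rewrite /pmono exprD; ring. Qed.

Lemma inner_sum k n : inner R k n = normc n ^+ 2 *
  \sum_(l < n.+1) adj_last n l * \sum_(j < n.+1) adj_first n j * pent j (l + k)%N.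
Proof.
rewrite /inner phiE psiE.
have wvX_phi : wv R ^+ k *
    (Defs.cst (normc n) * \sum_(j < n.+1) Defs.cst (adj_first n j) * pmono j (n - j)) =
  Defs.cst (normc n) * \sum_(j < n.+1) Defs.cst (adj_first n j) * pmono j (n - j + k).
  rewrite mulrCA mulr_sumr; congr (_ * _); apply: eq_bigr => j _.
  by rewrite mulrCA wvX_pmono.
have zvX_psi : zv R ^+ k *
    (Defs.cst (normc n) * \sum_(j < n.+1) Defs.cst (adj_last n j) * pmono j (n - j)) =
  Defs.cst (normc n) * \sum_(j < n.+1) Defs.cst (adj_last n j) * pmono (j + k) (n - j).
  rewrite mulrCA mulr_sumr; congr (_ * _); apply: eq_bigr => j _.
  by rewrite mulrCA zvX_pmono.
rewrite wvX_phi zvX_psi (@ip_boxE (n + k).+3); last first.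
  move=> a b out; rewrite coef2_cstM coef2_sum big1 ?mulr0 // => j _.
  by rewrite coef2_cstM (@coef2_pmono_out (n + k).+3) ?mulr0 //; have := ltn_ord j; lia.
rewrite ip_boxZl ip_boxZr ip_box_suml mulrA -expr2; congr (_ * _).
under [RHS]eq_bigr => l _ do rewrite mulr_sumr.
rewrite [RHS]exchange_big /=; apply: eq_bigr => j _.
rewrite ip_boxZl ip_box_sumr mulr_sumr; apply: eq_bigr => l _.
rewrite ip_boxZr ip_box_pmono.
- by rewrite mulrCA mulrA.
- by have := ltn_ord j; have := ltn_ord l; lia.
- by have := ltn_ord j; lia.
- by have := ltn_ord j; lia.
Qed.

Lemma inner_closed k n : (2 <= k)%N ->
  inner R k n = (det_closed n.+1 * det_closed n)^-1 *
   ((if (k <= n.+2)%N then cut (adj_last n) n.+1 (n.+2 - k) else 0) * adj_first n n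
  - (if (k <= n.+1)%N then cut (adj_last n) n.+1 (n.+1 - k) else 0)
      * adj_first n.+1 n.+1).
Proof.
move=> k_ge2; rewrite inner_sum normc_sqr; congr (_ * _).
have col_eq (l : 'I_n.+1) :
    adj_last n l * \sum_(j < n.+1) adj_first n j * pent j (l + k)%N =
    adj_last n l * (n.+2 == (l + k)%N)%:R * adj_first n n
    - adj_last n l * (n.+1 == (l + k)%N)%:R * adj_first n.+1 n.+1.
  by rewrite col_adj_first; [ring | lia].
under eq_bigr => l _ do rewrite col_eq.
by rewrite sumrB -!mulr_suml !sum_mul_eq_shift.
Qed.

Lemma inner_formula k n : (2 <= k)%N ->
  inner R k n =
    if (n + 3 <= k)%N then 0
    else if n == (k - 2)%N then
      Acof R n 0 n * Acof R n n 0 / (Dn R n * Dn R n.+1)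
    else
      (- Acof R n.+1 0 n.+1 * Acof R n n (n + 1 - k)
       + Acof R n 0 n * Acof R n n (n + 2 - k)) / (Dn R n * Dn R n.+1).
Proof.
move=> k_ge2; rewrite inner_closed // !Dn_closed.
case: (leqP (n + 3) k) => [k_big | k_small].
  by rewrite !ifF ?mul0r ?subrr ?mulr0 //; apply/negbTE; rewrite -ltnNge; lia.
case: (eqVneq n (k - 2)%N) => [nk | nk].
  have -> : k = n.+2 by lia.
  rewrite leqnn subnn cut_in // Acof_first // Acof_last // ifF; last first.
    by apply/negbTE; rewrite -ltnNge.
  by rewrite (mulrC (det_closed n)); ring.
rewrite !ifT ?cut_in; try lia.
rewrite Acof_first // Acof_first // !Acof_last ?addn1 ?addn2; try lia.
by rewrite (mulrC (det_closed n)); ring.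
Qed.

Lemma inner_small k n : (n + 3 <= k)%N -> inner R k n = 0.
Proof. by move=> n_small; rewrite inner_formula ?n_small //; lia. Qed.

Lemma inner_tail k n : (2 <= k)%N -> (k - 2 <= n)%N -> inner R k n = - sigma_root k n.
Proof.
move=> k_ge2 n_ge; rewrite inner_closed //.
have n_ge0 : 0 <= n%:R :> R := ler0n _ _.
case: (eqVneq k n.+2) => [-> | k_ne].
  rewrite leqnn subnn cut_in // ifF; last by apply/negbTE; rewrite -ltnNge.
  rewrite /adj_last /adj_first /adj_cubic /det_closed /sigma_root -!natr1.
  by field; repeat (apply/andP; split); apply/eqP; lra.
rewrite !ifT ?cut_in; try lia.
rewrite /adj_last /adj_first /adj_cubic /det_closed /sigma_root !natrB; try lia.
rewrite -!natr1.
by field; repeat (apply/andP; split); apply/eqP; lra.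
Qed.

Lemma norm_inner_sqr k n : (2 <= k)%N -> (k - 2 <= n)%N ->
  `|inner R k n| ^+ 2 = sigma_term R k n.
Proof. by move=> k_ge2 n_ge; rewrite real_normK ?num_real // inner_tail // sqrrN. Qed.

Lemma norm_inner_sqr_le k n : (2 <= k)%N ->
  `|inner R k n| ^+ 2 <= tail_const (k%:R : R) / (n.+1%:R * n.+2%:R).
Proof.
move=> k_ge2; case: (ltnP n (k - 2)) => [n_small | n_ge].
  rewrite inner_small; last lia.
  by rewrite normr0 expr0n divr_ge0 ?tail_const_ge0 ?mulr_ge0.
by rewrite norm_inner_sqr //; apply: sigma_root_sqr_le.
Qed.

Lemma sum_norm_inner_sqr_cvg k : (2 <= k)%N ->
  exists L : R,
    ((fun N : nat => \sum_(0 <= n < N) `|inner R k n| ^+ 2) @ \oo --> L)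
    /\ ((fun N : nat => \sum_(k - 2 <= n < N) sigma_term R k n) @ \oo --> L).
Proof.
move=> k_ge2; set u := fun N : nat => \sum_(0 <= n < N) `|inner R k n| ^+ 2.
have u_incr : {homo u : n m / (n <= m)%N >-> n <= m}.
  apply/nondecreasing_seqP => N; rewrite /u big_nat_recr //=.
  by rewrite lerDl sqr_ge0.
have u_bounded : has_ubound (range u).
  exists (tail_const (k%:R : R)) => _ [N _ <-].
  apply: (@le_trans _ _ (\sum_(0 <= n < N) tail_const (k%:R : R) / (n.+1%:R * n.+2%:R))).
    by apply: ler_sum => n _; apply: norm_inner_sqr_le.
  by rewrite -mulr_sumr sum_inv_natSS ler_piMr ?tail_const_ge0.
have u_cvg := nondecreasing_cvgn u_incr u_bounded.
exists (sup (range u)); split; first exact: u_cvg.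
apply: cvg_trans u_cvg; apply: near_eq_cvg; near=> N.
have N_ge : (k - 2 <= N)%N by near: N; exact: nbhs_infty_ge.
rewrite /u (big_cat_nat (n := (k - 2)%N)) //= big1_seq ?add0r.
  by apply: eq_big_nat => n /andP [n_ge _]; rewrite norm_inner_sqr.
move=> n /andP [_]; rewrite mem_index_iota => /andP [_ n_small].
by rewrite inner_small ?normr0 ?expr0n //; lia.
Unshelve. all: by end_near.
Qed.

End HardyBidisk.

Theorem mainTheorem8 (R : realType) :
  (forall k n : nat, (2 <= k)%N ->
     inner R k n =
       if (n + 3 <= k)%N then 0
       else if n == (k - 2)%N then
         Acof R n 0 n * Acof R n n 0 / (Dn R n * Dn R n.+1)
       else
         (- Acof R n.+1 0 n.+1 * Acof R n n (n + 1 - k)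
          + Acof R n 0 n * Acof R n n (n + 2 - k)) / (Dn R n * Dn R n.+1))
  /\
  (forall k : nat, (3 <= k)%N ->
     exists L : R,
       ((fun N : nat => \sum_(0 <= n < N) `|inner R k n| ^+ 2) @ \oo --> L)
       /\ ((fun N : nat => \sum_(k - 2 <= n < N) sigma_term R k n) @ \oo --> L)).
Proof.
split=> [k n k_ge2 | k k_ge3]; first exact: inner_formula.
by apply: sum_norm_inner_sqr_cvg; lia.
Qed.
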